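(* Let $n \ge 1$ and $t \ge 0$ be integers. If there is a $t$-resilient asynchronous message-passing protocol solving the colored cross-blockchain transaction task $(\mathcal{I}, \mathcal{O}, \Delta)$ on $n+1$ blockchains, then there is a $t$-resilient asynchronous message-passing protocol solving the colorless cross-blockchain transaction task $(\mathcal{I}, \mathcal{O}', \Xi)$ on $n+1$ blockchains. Both tasks are defined in the context.
   Context: Setting. There are $n+1$ distinct blockchains $C_0,\dots,C_n$. An $(n+1)$-party cross-blockchain transaction touches exactly one block $v_i$ on each blockchain $C_i$. Input complex $\mathcal{I}$. The vertices are the pairs $(v_i, a)$ with $0 \le i \le n$ and $a \in \{0,1,\bot\}$. Here $0$ means not committed, $1$ means committed, and $\bot$ means the block's branch was suspended by a fork. A nonempty set of vertices is a simplex if and only if its vertices involve pairwise distinct blocks. Colored output complex $\mathcal{O}$. The vertices are the pairs $(v_i, b)$ with $b \in \{0,1\}$, where $1$ means committed and $0$ means aborted. A nonempty set of vertices is a simplex if and only if its vertices involve pairwise distinct blocks and all carry the same value $b$. Hence $\mathcal{O}$ has two connected components. Colored carrier map $\Delta$. For a simplex $\sigma$ of $\mathcal{I}$ with block set $B(\sigma)$: - $\Delta(\sigma)$ is the simplex $\{(v,1) : v \in B(\sigma)\}$ together with its faces, if all input values in $\sigma$ are $1$; - it is $\{(v,0) : v \in B(\sigma)\}$ together with its faces, if some input value in $\sigma$ is $\bot$; - otherwise it is the subcomplex of $\mathcal{O}$ consisting of all simplices whose blocks lie in $B(\sigma)$, i.e. both the all-$0$ and the all-$1$ simplices on $B(\sigma)$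 and their faces. Colorless task. The colorless output complex $\mathcal{O}'$ has vertices $0$ and $1$ and only the simplices $\{0\}$ and $\{1\}$. The colorless carrier map is obtained from $\Delta$ by forgetting block identities: - $\Xi(\sigma)=\{1\}$ if all input values in $\sigma$ are $1$; - $\Xi(\sigma)=\{0\}$ if some input value in $\sigma$ is $\bot$; - $\Xi(\sigma)=\mathcal{O}'$ otherwise. Computational model. There are $n+1$ processes (process $i$ corresponds to blockchain $C_i$) communicating by asynchronous message passing, with at most $t$ crash failures. Process $i$ starts with an input vertex $(v_i,a_i)$ of $\mathcal{I}$. - A protocol solves the colored task if in every execution with at most $t$ crashes each non-crashed process $i$ eventually decides an output vertex $(v_i,b_i)$ of $\mathcal{O}$, and the set of decided vertices is a simplex of $\Delta(\sigma)$, where $\sigma$ is the simplex of inputs of the participating processes. - A protocol solves the colorless task if each non-crashed process eventually decides a value in $\{0,1\}$, and the set of decided values is a simplex of $\Xi(\sigma)$. *)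

From HB Require Import structures.
From Stdlib Require List.
From mathcomp Require Import all_boot.
Set Implicit Arguments.
Unset Strict Implicit.
Unset Printing Implicit Defensive.

(* Blockchain C_i carries block v_i; we identify block v_i with the    *)
(* index i : 'I_N (N = n+1).  Input values a : option bool with        *)
(*   None = ⊥ (suspended by fork), Some false = 0, Some true = 1.      *)

Section Complexes.
Variable N : nat.

Definition in_vertex := ('I_N * option bool)%type.
Definition out_vertex := ('I_N * bool)%type.

Definition distinct_blocks (T : finType) (s : {set 'I_N * T}) : bool :=
  [forall x in s, forall y in s, (x.1 == y.1) ==> (x == y)].

Definition blocks (T : finType) (s : {set 'I_N * T}) : {set 'I_N} :=
  [set x.1 | x in s].

Definition in_simplex (s : {set in_vertex}) : bool :=
  (s != set0) && distinct_blocks s.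

Definition out_simplex (s : {set out_vertex}) : bool :=
  [&& s != set0, distinct_blocks s & [forall x in s, forall y in s, x.2 == y.2]].

Definition out_complex : {set {set out_vertex}} := [set s | out_simplex s].

Definition faces (T : finType) (S : {set T}) : {set {set T}} :=
  [set s | (s != set0) && (s \subset S)].

Definition all_one (σ : {set in_vertex}) : bool := [forall x in σ, x.2 == Some true].
Definition some_bot (σ : {set in_vertex}) : bool := [exists x in σ, x.2 == None].

Definition Delta (σ : {set in_vertex}) : {set {set out_vertex}} :=
  if all_one σ then faces [set (v, true) | v in blocks σ]
  else if some_bot σ then faces [set (v, false) | v in blocks σ]
  else [set τ in out_complex | blocks τ \subset blocks σ].

(* colorless carrier map Ξ; O' has simplices {0} and {1} only *)
Definition Xi (σ : {set in_vertex}) : {set {set bool}} :=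
  if all_one σ then [set [set true]]
  else if some_bot σ then [set [set false]]
  else [set [set false]; [set true]].

End Complexes.

Record protocol (N : nat) (In Out : Type) := Protocol {
  pstate : Type;
  pmsg : Type;
  pinit : 'I_N -> In -> pstate;
  (* process, current state, received message (sender, payload) or none
     -> new state and list of messages to send (destination, payload) *)
  ptrans : 'I_N -> pstate -> option ('I_N * pmsg) -> pstate * seq ('I_N * pmsg);
  (* write-once decision: the first Some value is the decision *)
  pdecide : 'I_N -> pstate -> option Out }.

Section Model.
Variables (N : nat) (In Out : Type) (P : protocol N In Out).

Definition packet := ((nat * nat) * 'I_N * 'I_N * pmsg P)%type.
Definition pk_id (pk : packet) : nat * nat := pk.1.1.1.
Definition pk_src (pk : packet) : 'I_N := pk.1.1.2.
Definition pk_dst (pk : packet) : 'I_N := pk.1.2.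
Definition pk_msg (pk : packet) : pmsg P := pk.2.

Definition config := (('I_N -> pstate P) * seq packet)%type.

(* an event: no-op, or process p takes a step receiving nothing
   or receiving the in-transit packet with the given id *)
Definition event := option ('I_N * option (nat * nat)).

Definition upd (st : 'I_N -> pstate P) (p : 'I_N) (s : pstate P) : 'I_N -> pstate P :=
  fun q => if q == p then s else st q.

Definition tag (k : nat) (p : 'I_N) (out : seq ('I_N * pmsg P)) : seq packet :=
  [seq (((k, x.1), p, x.2.1, x.2.2) : packet) | x <- zip (iota 0 (size out)) out].

Definition step (k : nat) (c : config) (e : event) (c' : config) : Prop :=
  match e with
  | None => c' = c
  | Some (p, None) =>
      let r := @ptrans _ _ _ P p (c.1 p) None in
      c' = (upd c.1 p r.1, c.2 ++ tag k p r.2)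
  | Some (p, Some id) =>
      exists pk : packet, Stdlib.Lists.List.In pk c.2 /\ pk_id pk = id /\ pk_dst pk = p /\
        let r := @ptrans _ _ _ P p (c.1 p) (Some (pk_src pk, pk_msg pk)) in
        c' = (upd c.1 p r.1, [seq q <- c.2 | pk_id q != id] ++ tag k p r.2)
  end.

Definition steps_of (p : 'I_N) (e : event) : bool :=
  if e is Some (q, _) then q == p else false.

Definition execution (inp : 'I_N -> In) (c : nat -> config) (e : nat -> event) : Prop :=
  c 0 = ((fun p => @pinit _ _ _ P p (inp p)), [::]) /\
  forall k, step k (c k) (e k) (c k.+1).

(* F is the set of crashed processes: they take finitely many steps;
   all others take infinitely many steps, and every message sent to a
   non-crashed process is eventually delivered. *)
Definition admissible (c : nat -> config) (e : nat -> event) (F : {set 'I_N}) : Prop :=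
  [/\ forall p, p \in F -> exists K, forall k, K <= k -> ~~ steps_of p (e k),
      forall p, p \notin F -> forall K, exists k, K <= k /\ steps_of p (e k)
    & forall k pk, Stdlib.Lists.List.In pk (c k).2 -> pk_dst pk \notin F ->
        exists k', k <= k' /\ e k' = Some (pk_dst pk, Some (pk_id pk))].

Definition run (t : nat) (inp : 'I_N -> In) c e (F : {set 'I_N}) : Prop :=
  [/\ execution inp c e, admissible c e F & #|F| <= t].

Definition decides (c : nat -> config) (p : 'I_N) (o : Out) : Prop :=
  exists k, @pdecide _ _ _ P p ((c k).1 p) = Some o /\
            forall k', k' < k -> @pdecide _ _ _ P p ((c k').1 p) = None.

Definition participates (c : nat -> config) (e : nat -> event) (p : 'I_N) : Prop :=
  (exists k, steps_of p (e k)) \/ (exists o, decides c p o).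

End Model.

Definition solves_colored (N t : nat)
    (P : protocol N (in_vertex N) (out_vertex N)) : Prop :=
  forall (inp : 'I_N -> in_vertex N), (forall i, (inp i).1 = i) ->
  forall (c : nat -> config P) (e : nat -> event N) (F : {set 'I_N}),
  run t inp c e F ->
  [/\ forall p, p \notin F -> exists o, decides c p o,
      forall p o, decides c p o -> o.1 = p
    & forall (S : {set 'I_N}) (D : {set out_vertex N}),
        (forall p, p \in S <-> participates c e p) ->
        (forall x, x \in D <-> exists p, decides c p x) ->
        D = set0 \/ D \in Delta [set inp p | p in S]].

Definition solves_colorless (N t : nat)
    (P : protocol N (in_vertex N) bool) : Prop :=
  forall (inp : 'I_N -> in_vertex N), (forall i, (inp i).1 = i) ->
  forall (c : nat -> config P) (e : nat -> event N) (F : {set 'I_N}),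
  run t inp c e F ->
  (forall p, p \notin F -> exists o, decides c p o) /\
  (forall (S : {set 'I_N}) (D : {set bool}),
      (forall p, p \in S <-> participates c e p) ->
      (forall x, x \in D <-> exists p, decides c p x) ->
      D = set0 \/ D \in Xi [set inp p | p in S]).

From mathcomp Require Import all_boot.
From Stdlib Require Import ClassicalEpsilon.

Set Implicit Arguments.
Unset Strict Implicit.
Unset Printing Implicit Defensive.

(* The colorless protocol is the colored one with every decision (v, b)
   replaced by its color b.  Runs are unchanged, and the decided colors are
   the colors of the decided vertices.  A nonempty simplex of Delta(sigma)
   is monochromatic, and its color is the one Xi(sigma) allows: 1 if every
   input is 1, 0 if some input is bot, either color otherwise. *)

Lemma imset_const (aT rT : finType) (f : aT -> rT) (A : {set aT}) (b : rT) :
  A != set0 -> {in A, forall x, f x = b} -> f @: A = [set b].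
Proof.
case/set0Pn=> x0 Ax0 fAb; apply/setP=> y; rewrite inE.
apply/imsetP/eqP=> [[x Ax ->] | ->]; first exact: fAb.
by exists x0; rewrite ?fAb.
Qed.

Lemma finset_of_pred (T : finType) (Q : T -> Prop) :
  exists A : {set T}, forall x, x \in A <-> Q x.
Proof.
exists [set x | if excluded_middle_informative (Q x) then true else false].
by move=> x; rewrite inE; case: excluded_middle_informative.
Qed.

Lemma colors_face_const (T U : finType) (b : U) (B : {set T})
    (tau : {set T * U}) :
  tau \in faces [set (v, b) | v in B] -> [set x.2 | x in tau] = [set b].
Proof.
rewrite inE => /andP[tau_ne /subsetP tau_sub]; apply: imset_const => // x.
by move=> /tau_sub /imsetP[v _ ->].
Qed.

Lemma colors_Delta_in_Xi (N : nat) (sigma : {set in_vertex N})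
    (tau : {set out_vertex N}) :
  tau \in Delta sigma -> [set x.2 | x in tau] \in Xi sigma.
Proof.
rewrite /Delta /Xi; case: (all_one _).
  by move/colors_face_const ->; rewrite inE.
case: (some_bot _).
  by move/colors_face_const ->; rewrite inE.
rewrite !inE => /andP[/and3P[tau_ne _ /forall_inP mono] _].
have [x0 tau_x0] := set0Pn _ tau_ne.
rewrite (@imset_const _ _ _ _ x0.2) // => [|x tau_x].
  by case: x0.2; rewrite eqxx ?orbT.
by apply/eqP; move/forall_inP: (mono x tau_x); apply.
Qed.

Section MapDecision.
Variables (N : nat) (In Out Out' : Type) (f : Out -> Out') (P : protocol N In Out).

Definition map_decision : protocol N In Out' :=
  Protocol (@pinit _ _ _ P) (@ptrans _ _ _ P)
    (fun p s => omap f (@pdecide _ _ _ P p s)).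

Lemma decides_map_decision (c : nat -> config P) p b :
  decides (P := map_decision) c p b <-> exists2 o, decides c p o & f o = b.
Proof.
split=> [[k /= [dec_k undec]] | [o [k [dec_k undec]] <-]].
  move: dec_k; case dec_k: (pdecide _ _) => [o|] //= [<-].
  exists o => //; exists k; split=> // k' /undec /=.
  by case: (pdecide _ _).
by exists k; split=> [|k' /undec /= ->]; rewrite /= ?dec_k.
Qed.

Lemma participates_map_decision (c : nat -> config P) e p :
  participates (P := map_decision) c e p <-> participates c e p.
Proof.
split=> [] [steps | [o dec_o]]; (try by left); right.
  by have [o' dec_o' _] := (decides_map_decision c p o).1 dec_o; exists o'.
by exists (f o); apply/decides_map_decision; exists o.
Qed.

End MapDecision.

Lemma decided_map_decision (N : nat) (In : Type) (Out Out' : finType)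
    (f : Out -> Out') (P : protocol N In Out) (c : nat -> config P)
    (D : {set Out}) (D' : {set Out'}) :
  (forall x, x \in D <-> exists p, decides c p x) ->
  (forall y, y \in D' <-> exists p, decides (P := map_decision f P) c p y) ->
  D' = f @: D.
Proof.
move=> defD defD'; apply/setP=> y; apply/idP/imsetP.
  by case/defD'=> p /decides_map_decision[o dec_o <-]; exists o => //; apply/defD; exists p.
case=> o /defD[p dec_o] ->; apply/defD'; exists p.
by apply/decides_map_decision; exists o.
Qed.

Theorem lemma3 (n t : nat) (hn : 1 <= n) :
  (exists P : protocol n.+1 (in_vertex n.+1) (out_vertex n.+1),
      solves_colored t P) ->
  exists P : protocol n.+1 (in_vertex n.+1) bool, solves_colorless t P.
Proof.
case=> P solP; exists (map_decision snd P) => inp inp_blocks c e F runF.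
have [term _ valid] := solP inp inp_blocks c e F runF.
split=> [p /term[o dec_o] | S D' defS defD'].
  by exists o.2; apply/decides_map_decision; exists o.
have [D defD] := finset_of_pred (fun x => exists p, decides (P := P) c p x).
have defS_P p : p \in S <-> participates (P := P) c e p.
  exact: iff_trans (defS p) (participates_map_decision snd (P := P) c e p).
rewrite (decided_map_decision defD defD').
case: (valid S D defS_P defD) => [-> | Delta_D]; first by left; rewrite imset0.
by right; apply: colors_Delta_in_Xi.
Qed.
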